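(* Let $f\colon X\to Y$ be a standard proper map between standard coarse spaces, where $X$ is non-empty and $Y$ is connected. If ${}^*f\colon\partial_SX\to\partial_SY$ is coarsely surjective, then $f$ is coarsely surjective.
   Context: Nonstandard framework with transfer and sufficient saturation. Coarse structure $\mathcal{C}_X$: family of subsets of $X\times X$ containing the diagonal, closed under subsets, finite unions, inverses, compositions; connected if every singleton $\{(x,y)\}$ is controlled. Induced prebornology $\mathcal{B}_X=\{B:B\times B\in\mathcal{C}_X\}$; proper map: preimages of bounded sets are bounded. $\mathrm{INF}(X)={}^*X\setminus\bigcup_{B\in\mathcal{B}_X}{}^*B$; $\partial_SX$ is $\mathrm{INF}(X)$ with coarse structure $\{E\subseteq\mathrm{INF}(X)^2:E\subseteq{}^*F,\ F\in\mathcal{C}_X\}$. A map $g\colon Z\to W$ of coarse spaces is coarsely surjective if $E[g(Z)]=W$ for some controlled $E$ of $W$ (here ${}^*f$ is regarded as a map $\partial_SX\to\partial_SY$, assuming it maps $\mathrm{INF}(X)$ into $\mathrm{INF}(Y)$). *)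

From Stdlib Require Import List.
Set Implicit Arguments.

Definition rel (T : Type) := T -> T -> Prop.

Record is_coarse_structure (X : Type) (C : rel X -> Prop) : Prop := {
  cs_diag  : C (fun x y => x = y);
  cs_sub   : forall E E', C E -> (forall x y, E' x y -> E x y) -> C E';
  cs_union : forall E1 E2, C E1 -> C E2 -> C (fun x y => E1 x y \/ E2 x y);
  cs_inv   : forall E, C E -> C (fun x y => E y x);
  cs_comp  : forall E1 E2, C E1 -> C E2 ->
               C (fun x z => exists y, E1 x y /\ E2 y z)
}.

Definition coarse_connected (X : Type) (C : rel X -> Prop) : Prop :=
  forall x y : X, C (fun a b => a = x /\ b = y).

Definition bounded (X : Type) (C : rel X -> Prop) (B : X -> Prop) : Prop :=
  C (fun x y => B x /\ B y).

Definition proper_map (X Y : Type) (CX : rel X -> Prop) (CY : rel Y -> Prop)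
  (f : X -> Y) : Prop :=
  forall B, bounded CY B -> bounded CX (fun x => B (f x)).

Definition coarsely_surjective (Z W : Type) (CW : rel W -> Prop) (g : Z -> W)
  : Prop :=
  exists E, CW E /\ forall w : W, exists z : Z, E (g z) w.

Record is_ultrafilter (I : Type) (U : (I -> Prop) -> Prop) : Prop := {
  uf_full  : U (fun _ => True);
  uf_proper : ~ U (fun _ => False);
  uf_up    : forall A B, U A -> (forall i, A i -> B i) -> U B;
  uf_inter : forall A B, U A -> U B -> U (fun i => A i /\ B i);
  uf_ult   : forall A, U A \/ U (fun i => ~ A i)
}.

(** Elements of *T are represented by functions I -> T, modulo ueq. *)
Definition ueq (I T : Type) (U : (I -> Prop) -> Prop) (a b : I -> T) : Prop :=
  U (fun i => a i = b i).

Definition star_set (I T : Type) (U : (I -> Prop) -> Prop) (A : T -> Prop)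
  (a : I -> T) : Prop := U (fun i => A (a i)).

Definition star_rel (I T : Type) (U : (I -> Prop) -> Prop) (F : rel T)
  (a b : I -> T) : Prop := U (fun i => F (a i) (b i)).

Definition star_map (I X Y : Type) (f : X -> Y) (a : I -> X) : I -> Y :=
  fun i => f (a i).

Definition INF (I X : Type) (U : (I -> Prop) -> Prop) (C : rel X -> Prop)
  (a : I -> X) : Prop :=
  forall B, bounded C B -> ~ star_set U B a.

(** A subset of (∂_S X)^2, given on representatives, must be invariant
    under ueq (i.e. be a genuine set of pairs of classes). *)
Definition ueq_invariant (I X : Type) (U : (I -> Prop) -> Prop)
  (E : rel (I -> X)) : Prop :=
  forall a a' b b', ueq U a a' -> ueq U b b' -> E a b -> E a' b'.

Definition boundary_controlled (I X : Type) (U : (I -> Prop) -> Prop)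
  (C : rel X -> Prop) (E : rel (I -> X)) : Prop :=
  ueq_invariant U E /\
  (forall a b, E a b -> INF U C a /\ INF U C b) /\
  exists F, C F /\ forall a b, E a b -> star_rel U F a b.

Definition star_coarsely_surjective (I X Y : Type) (U : (I -> Prop) -> Prop)
  (CX : rel X -> Prop) (CY : rel Y -> Prop) (f : X -> Y) : Prop :=
  exists E, boundary_controlled U CY E /\
    forall w : I -> Y,
      INF U CY w <-> exists z, INF U CX z /\ E (star_map f z) w.

(** Saturation: every family of internal subsets of *T, indexed by a set J
    of cardinality at most |K|, with the finite intersection property, has
    nonempty intersection.  (Internal subsets of *T are [A_i]_U with
    A : I -> (T -> Prop).) *)
Definition saturated_for (I : Type) (U : (I -> Prop) -> Prop) (K T : Type)
  : Prop :=
  forall (J : Type) (A : J -> I -> T -> Prop),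
    (exists h : J -> K, forall j j', h j = h j' -> j = j') ->
    (forall l : list J, exists a : I -> T,
        U (fun i => forall j, In j l -> A j i (a i))) ->
    exists a : I -> T, forall j, U (fun i => A j i (a i)).

(** If [f] missed, for every controlled [G], some point outside [G[f(X)]],
    saturation would produce a nonstandard [w] outside every [*(G[f(X)])].
    Such a [w] lies in no [*B] with [B] bounded, since [{f x0} x B] is
    controlled when [Y] is connected; so [w] is infinite.  Coarse
    surjectivity of [*f] then places [w] in [E[*f(z)]] with [E] inside some
    [*F], i.e. in [*(F[f(X)])], a contradiction. *)

From Stdlib Require Import List Classical.

Set Implicit Arguments.
Unset Strict Implicit.

Lemma ultrafilter_inhabited (I : Type) (U : (I -> Prop) -> Prop) (P : I -> Prop) :
  is_ultrafilter U -> U P -> exists i, P i.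
Proof.
  intros HU HP; apply NNPP; intro Hn.
  apply (uf_proper HU), (uf_up HU _ _ HP).
  intros i Hi; apply Hn; exists i; exact Hi.
Qed.

Section CoarseStructure.

Variables (Y : Type) (CY : rel Y -> Prop).
Hypothesis HC : is_coarse_structure CY.

Lemma controlled_list_union (l : list (rel Y)) :
  CY (fun a b => exists G, In G l /\ CY G /\ G a b).
Proof.
  induction l as [|G l IH].
  - apply (cs_sub HC _ _ (cs_diag HC)); intros a b [G [[] _]].
  - destruct (classic (CY G)) as [HG|HG].
    + apply (cs_sub HC _ _ (cs_union HC _ _ HG IH)).
      intros a b [G' [[<-|Hin] [HG' Hab]]]; [left | right; exists G']; auto.
    + apply (cs_sub HC _ _ IH).
      intros a b [G' [[<-|Hin] [HG' Hab]]]; [contradiction | exists G'; auto].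
Qed.

Lemma controlled_point_bounded (y b0 : Y) (B : Y -> Prop) :
  coarse_connected CY -> bounded CY B -> B b0 ->
  CY (fun a b => a = y /\ B b).
Proof.
  intros Hconn HB Hb0.
  apply (cs_sub HC _ _ (cs_comp HC _ _ (Hconn y b0) HB)).
  intros a b [-> Hb]; exists b0; auto.
Qed.

Variables (X : Type) (f : X -> Y).

Lemma not_coarsely_surjective_far_point (l : list (rel Y)) :
  ~ coarsely_surjective CY f ->
  exists y, forall G, In G l -> CY G -> ~ exists x, G (f x) y.
Proof.
  intros Hns; apply NNPP; intro Hall; apply Hns.
  exists (fun a b => exists G, In G l /\ CY G /\ G a b).
  split; [apply controlled_list_union|].
  intro y; apply NNPP; intro Hy; apply Hall; exists y.
  intros G Hin HG [x Hx]; apply Hy; exists x, G; auto.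
Qed.

Variables (I : Type) (U : (I -> Prop) -> Prop).
Hypothesis HU : is_ultrafilter U.

Lemma saturated_far_point (K : Type) :
  saturated_for U K Y ->
  (exists h : rel Y -> K, forall G G', h G = h G' -> G = G') ->
  ~ coarsely_surjective CY f ->
  exists w : I -> Y, forall G, CY G -> U (fun i => ~ exists x, G (f x) (w i)).
Proof.
  intros Hsat Hemb Hns.
  destruct (Hsat (rel Y) (fun G _ y => CY G -> ~ exists x, G (f x) y) Hemb)
    as [w Hw].
  - intro l; destruct (not_coarsely_surjective_far_point l Hns) as [y Hy].
    exists (fun _ => y); apply (uf_up HU _ _ (uf_full HU)).
    intros i _ G Hin; exact (Hy G Hin).
  - exists w; intros G HG; apply (uf_up HU _ _ (Hw G)); auto.
Qed.

Lemma far_point_INF (w : I -> Y) (x0 : X) :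
  coarse_connected CY ->
  (forall G, CY G -> U (fun i => ~ exists x, G (f x) (w i))) ->
  INF U CY w.
Proof.
  intros Hconn Hw B HB HBw.
  destruct (ultrafilter_inhabited HU HBw) as [i0 Hi0].
  pose proof (controlled_point_bounded (f x0) Hconn HB Hi0) as HG.
  destruct (ultrafilter_inhabited HU (uf_inter HU _ _ HBw (Hw _ HG)))
    as [i [Hb Hn]].
  apply Hn; exists x0; auto.
Qed.

Lemma star_coarsely_surjective_INF (CX : rel X -> Prop) (w : I -> Y) :
  star_coarsely_surjective U CX CY f -> INF U CY w ->
  exists F, CY F /\ U (fun i => exists x, F (f x) (w i)).
Proof.
  intros [E [[_ [_ [F [HF HEF]]]] HE]] Hw.
  destruct (proj1 (HE w) Hw) as [z [_ Hz]].
  exists F; split; [exact HF|].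
  apply (uf_up HU _ _ (HEF _ _ Hz)); intros i Hi; exists (z i); exact Hi.
Qed.

End CoarseStructure.

Lemma uncurry_rel_injective (X Y : Type) :
  exists h : rel Y -> (X * X -> Prop) + (Y * Y -> Prop),
    forall G G', h G = h G' -> G = G'.
Proof.
  exists (fun G => inr (fun p : Y * Y => G (fst p) (snd p))).
  intros G G' Heq; injection Heq as Heq.
  change G with (fun a b => (fun p : Y * Y => G (fst p) (snd p)) (a, b)).
  rewrite Heq; reflexivity.
Qed.

Theorem mainTheorem14 (I : Type) (U : (I -> Prop) -> Prop)
  (X Y : Type) (CX : rel X -> Prop) (CY : rel Y -> Prop) (f : X -> Y) :
  is_ultrafilter U ->
  saturated_for U ((X * X -> Prop) + (Y * Y -> Prop)) X ->
  saturated_for U ((X * X -> Prop) + (Y * Y -> Prop)) Y ->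
  is_coarse_structure CX -> is_coarse_structure CY ->
  inhabited X -> coarse_connected CY ->
  proper_map CX CY f ->
  star_coarsely_surjective U CX CY f ->
  coarsely_surjective CY f.
Proof.
  intros HU _ HsatY _ HC [x0] Hconn _ Hstar.
  apply NNPP; intro Hns.
  destruct (saturated_far_point HC HU HsatY (uncurry_rel_injective X Y) Hns)
    as [w Hw].
  pose proof (far_point_INF HC HU x0 Hconn Hw) as Hinf.
  destruct (star_coarsely_surjective_INF HU Hstar Hinf) as [F [HF HFw]].
  destruct (ultrafilter_inhabited HU (uf_inter HU _ _ HFw (Hw F HF)))
    as [i [Hnear Hfar]].
  exact (Hfar Hnear).
Qed.
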